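(* Let $\lambda>0$ and $d\ge3$. Then the function $C_\lambda(u_1,\dots,u_d)=\phi_\lambda^{[-1]}(\phi_\lambda(u_1)+\cdots+\phi_\lambda(u_d))$, $u_1,\dots,u_d\in[0,1]$, is not a $d$-dimensional copula.
   Context: For $\lambda\neq-1,0$, $\phi_\lambda(x)=\frac{1}{\lambda(\lambda+1)}(x^{\lambda+1}-x+\lambda(1-x))$ for $x\ge0$; for $\lambda>0$, $\phi_\lambda(0)=1/(\lambda+1)$ and $\phi_\lambda$ is convex and strictly decreasing on $[0,1]$ with $\phi_\lambda(1)=0$. The pseudoinverse is $\phi_\lambda^{[-1]}(t)=\phi_\lambda^{-1}(t)$ (inverse of $\phi_\lambda|_{[0,1]}$) for $0\le t<\phi_\lambda(0)$ and $\phi_\lambda^{[-1]}(t)=0$ for $t\ge\phi_\lambda(0)$. A $d$-dimensional copula is a joint CDF on $[0,1]^d$ with uniform $[0,1]$ margins. *)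

From HB Require Import structures.
From mathcomp Require Import all_boot all_order all_algebra.
From mathcomp Require Import all_classical all_reals all_analysis.
Set Implicit Arguments. Unset Strict Implicit. Unset Printing Implicit Defensive.
Import Order.TTheory GRing.Theory Num.Theory.
Import numFieldNormedType.Exports.
Local Open Scope classical_set_scope.
Local Open Scope ring_scope.

Definition phi {R : realType} (lam x : R) : R :=
  (x `^ (lam + 1) - x + lam * (1 - x)) / (lam * (lam + 1)).

Definition phi_pinv {R : realType} (lam t : R) : R :=
  if t < phi lam 0 then
    xget 0 [set x : R | 0 <= x <= 1 /\ phi lam x = t]
  else 0.

Definition Clam {R : realType} (lam : R) (d : nat) (u : 'I_d -> R) : R :=
  phi_pinv lam (\sum_(i < d) phi lam (u i)).

Definition is_copula {R : realType} {d : nat} (C : ('I_d -> R) -> R) : Prop :=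
  exists (dT : measure_display) (T : measurableType dT) (P : probability T R)
         (X : 'I_d -> T -> R),
    (forall i, measurable_fun setT (X i)) /\
    (forall i (t : R), 0 <= t <= 1 -> P [set w | X i w <= t] = t%:E) /\
    (forall u : 'I_d -> R, (forall i, 0 <= u i <= 1) ->
        P [set w | forall i, X i w <= u i] = (C u)%:E).

From HB Require Import structures.
From mathcomp Require Import all_boot all_order all_algebra.
From mathcomp Require Import all_classical all_reals all_analysis.
From mathcomp Require Import lra.
Set Implicit Arguments.
Unset Strict Implicit.
Unset Printing Implicit Defensive.
Import Order.TTheory GRing.Theory Num.Theory.
Import numFieldNormedType.Exports.
Local Open Scope ring_scope.
Local Open Scope classical_set_scope.

(** If C_lambda were the joint distribution function of a random vector X
  with uniform margins, then C(u_1, u_2, u_3, 1, ..., 1) would be the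
  probability of the lower orthant at (u_1, u_2, u_3, 1, ..., 1). Pick
  a <= b and x < 3w with 3 phi(b) = phi(x), phi(a) + 2 phi(b) = phi(w) and
  2 phi(a) + phi(b) >= phi(0). The orthants at (a,b,b), (b,a,b), (b,b,a) then
  have probability C(w,1,...,1) = w each, lie in the orthant at (b,b,b) of
  probability C(x,1,...,1) = x, and pairwise meet in orthants on which C
  vanishes, so 3w <= x. Such points exist because
  phi(t) = phi(0) - t/lambda + t^(lambda+1)/(lambda(lambda+1)) is almost
  affine near 0: take x small and w = 2x/5. *)

Section phi_lambda.
Variables (R : realType) (lam : R).

Lemma phi1 : phi lam 1 = 0.
Proof. by rewrite /phi powR1 subrr add0r mulr0 mul0r. Qed.

Lemma phi_pinv_eq0 t : phi lam 0 <= t -> phi_pinv lam t = 0.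
Proof. by rewrite /phi_pinv ltNge => ->. Qed.

Lemma phi_continuous_on w : 0 < w -> {within `[w, 1], continuous (phi lam)}.
Proof.
move=> w_gt0; apply: continuous_in_subspaceT => y.
rewrite inE /= in_itv /= => /andP[wy _].
have pow_cont : {for y, continuous (fun z : R => z `^ (lam + 1))}.
  apply/differentiable_continuous/derivable1_diffP/derivable_powR.
  by rewrite in_itv /= andbT (lt_le_trans w_gt0).
suff phi_cont : {for y, continuous (phi lam)} by exact: phi_cont.
rewrite /phi; apply: continuousM; last exact: cvg_cst.
apply: continuousD; first by apply: continuousB => //; exact: cvg_id.
apply: continuousM; first exact: cvg_cst.
by apply: continuousB; [exact: cvg_cst | exact: cvg_id].
Qed.

Lemma exists_small_powR : 0 < lam ->
  exists2 x : R, 0 < x <= lam / (lam + 1) & x `^ lam <= 5^-1.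
Proof.
move=> lam_gt0; have p_gt0 : 0 < lam + 1 by lra.
have lp_gt0 : 0 < lam / (lam + 1) by rewrite divr_gt0.
have lp_le1 : lam / (lam + 1) <= 1 by rewrite ler_pdivrMr // mul1r; lra.
set r := (5^-1 : R) `^ lam^-1.
have r_gt0 : 0 < r by apply: powR_gt0; lra.
have r_le1 : r <= 1.
  rewrite /r -[leRHS](powRr0 (5^-1 : R)).
  apply: ger_powR; last by rewrite invr_ge0 ltW.
  by apply/andP; split; lra.
exists (lam / (lam + 1) * r).
  by rewrite mulr_gt0 //= ler_piMr // ltW.
have rl : r `^ lam = 5^-1 by rewrite /r -powRrM mulVf ?gt_eqF // powRr1 //; lra.
have lpl : (lam / (lam + 1)) `^ lam <= 1.
  rewrite -[leRHS](powRr0 (lam / (lam + 1))); apply: ger_powR; last exact: ltW.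
  by rewrite lp_gt0 lp_le1.
rewrite powRM ?(ltW lp_gt0) ?(ltW r_gt0) // rl.
by rewrite ler_piMl // ?powR_ge0.
Qed.

Lemma phi_two_fifths (x : R) :
  0 < lam -> 0 < x <= lam / (lam + 1) -> x `^ lam <= 5^-1 ->
  [/\ 0 <= phi lam x, phi lam x <= phi lam (2/5 * x)
    & phi lam 0 <= 2 * phi lam (2/5 * x) - phi lam x].
Proof.
move=> lam_gt0 /andP[x_gt0 x_le] xl.
set p := lam + 1; set k := (lam * p)^-1.
have p_gt0 : 0 < p by rewrite /p; lra.
have k_gt0 : 0 < k by rewrite invr_gt0 mulr_gt0.
have xp : x * p <= lam by rewrite -ler_pdivlMr.
have powx : x `^ p = x `^ lam * x.
  by rewrite powRD ?(powRr1 (ltW x_gt0)) //; apply/implyP => _; rewrite gt_eqF.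
have powy : (2/5 * x) `^ p = (2/5) `^ p * (x `^ lam * x).
  by rewrite powRM ?(ltW x_gt0) ?powx //; lra.
rewrite /phi powR0 ?gt_eqF // powx powy -/p -/k.
set q := x `^ lam; set t := (2/5 : R) `^ p.
have t_ge0 : 0 <= t by exact: powR_ge0.
have t_le1 : t <= 1.
  rewrite -[leRHS](powRr0 (2/5 : R)); apply: ger_powR; last exact: ltW.
  by apply/andP; split; lra.
have qx_ge0 : 0 <= q * x by rewrite mulr_ge0 ?powR_ge0 ?ltW.
have qx_le : q * x <= x / 5.
  by rewrite mulrC; apply: ler_wpM2l; [exact: ltW | exact: xl].
have tqx_ge0 : 0 <= t * (q * x) by rewrite mulr_ge0.
have tqx_le : t * (q * x) <= q * x by rewrite ler_piMl.
have xlam : x + lam * x <= lam by move: xp; rewrite /p; lra.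
have lamx_ge0 : 0 <= lam * x by rewrite mulr_ge0 ?ltW.
split.
- by apply: mulr_ge0; [lra | exact: ltW].
- by apply: ler_wpM2r; [exact: ltW | lra].
- have gap : lam <= 2 * (t * (q * x) - 2/5 * x + lam * (1 - 2/5 * x))
      - (q * x - x + lam * (1 - x)) by lra.
  have := ler_wpM2r (ltW k_gt0) gap; lra.
Qed.

Lemma phi_onto (w v : R) : 0 < w <= 1 -> 0 <= v <= phi lam w ->
  exists2 c, w <= c <= 1 & phi lam c = v.
Proof.
move=> /andP[w_gt0 w_le1] /andP[v_ge0 v_le].
have [|c] := IVT w_le1 (phi_continuous_on w_gt0) (_ : _ <= v <= _).
  by rewrite phi1 ge_min le_max v_le v_ge0 orbT.
by rewrite in_itv /= => wc phic; exists c.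
Qed.

Lemma phi_three_points : 0 < lam -> exists x w a b : R,
  [/\ 0 <= x <= 1, 0 <= w <= 1 & x < 3 * w] /\
  [/\ 0 <= a, a <= b & b <= 1] /\
  [/\ phi lam b + phi lam b + phi lam b = phi lam x,
      phi lam a + phi lam b + phi lam b = phi lam w
    & phi lam 0 <= phi lam a + phi lam a + phi lam b].
Proof.
move=> lam_gt0.
have [x /andP[x_gt0 x_le] xl] := exists_small_powR lam_gt0.
have [phix_ge0 phix_le gap] :=
  phi_two_fifths lam_gt0 (introT andP (conj x_gt0 x_le)) xl.
have x_le1 : x <= 1.
  by apply: le_trans x_le _; rewrite ler_pdivrMr ?mul1r; lra.
set w := 2/5 * x in phix_le gap.
have w_gt0 : 0 < w by rewrite /w; lra.
have w_le1 : w <= 1 by rewrite /w; lra.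
have x_lt : x < 3 * w by rewrite /w; lra.
have [a /andP[wa a_le1] phia] : exists2 a, w <= a <= 1 &
    phi lam a = phi lam w - 2/3 * phi lam x.
  by apply: phi_onto; apply/andP; split; lra.
have [b /andP[ab b_le1] phib] : exists2 b, a <= b <= 1 & phi lam b = phi lam x / 3.
  by apply: phi_onto; apply/andP; split; lra.
have x01 : 0 <= x <= 1 by rewrite ltW.
have w01 : 0 <= w <= 1 by rewrite ltW.
by exists x, w, a, b; split; [|split]; split => //; lra.
Qed.

End phi_lambda.

Definition pad_ones {R : pzSemiRingType} {d : nat} (s : seq R) : 'I_d -> R :=
  fun k => nth 1 s k.

Lemma pad_ones_in01 (R : numDomainType) d (s : seq R) :
  all (fun c => 0 <= c <= 1) s -> forall k : 'I_d, 0 <= pad_ones s k <= 1.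
Proof.
move=> s01 k; rewrite /pad_ones; case: (ltnP k (size s)) => ks.
  by apply: (allP s01); rewrite mem_nth.
by rewrite nth_default // ler01 lexx.
Qed.

Lemma sum_ord_nth (V : nmodType) (T : Type) (x0 : T) (g : T -> V) (s : seq T) d :
  g x0 = 0 -> (size s <= d)%N -> \sum_(k < d) g (nth x0 s k) = \sum_(c <- s) g c.
Proof.
move=> g0 sd; rewrite -(big_mkord (fun=> true) (fun k => g (nth x0 s k))).
rewrite (big_cat_nat (leq0n _) sd) /=.
rewrite [X in _ + X]big1_seq ?addr0 ?(big_nth x0) // => k /andP[_].
by rewrite mem_index_iota => /andP[sk _]; rewrite nth_default.
Qed.

Lemma Clam_pad_ones (R : realType) (lam : R) d (s : seq R) : (size s <= d)%N ->
  Clam lam (pad_ones s : 'I_d -> R) = phi_pinv lam (\sum_(c <- s) phi lam c).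
Proof. by move=> sd; rewrite /Clam sum_ord_nth ?phi1. Qed.

Section null_intersections.
Local Open Scope ereal_scope.
Variables (dT : measure_display) (T : measurableType dT) (R : realType).
Variable P : probability T R.

Lemma measureU_null_meet (A B : set T) : measurable A -> measurable B ->
  P (A `&` B) = 0 -> P (A `|` B) = P A + P B.
Proof.
move=> mA mB AB0; rewrite measureUfinl //; last first.
  by apply: le_lt_trans (probability_le1 P mA) _; rewrite ltry.
(* [AB0] is stated through the probability coercion, the goal through the
   measure one: align them before rewriting. *)
by rewrite -[X in _ - X]/(P (A `&` B)) AB0 sube0.
Qed.

Lemma measureU3_null_meet (A B C : set T) :
  measurable A -> measurable B -> measurable C ->
  P (A `&` B) = 0 -> P (A `&` C) = 0 -> P (B `&` C) = 0 ->
  P (A `|` B `|` C) = P A + P B + P C.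
Proof.
move=> mA mB mC AB0 AC0 BC0.
rewrite measureU_null_meet ?measureU_null_meet //; first exact: measurableU.
rewrite setIUl null_set_setU //; exact: measurableI.
Qed.

End null_intersections.

Section orthant.
Variables (R : realType) (dT : measure_display) (T : measurableType dT).
Variables (P : probability T R) (d : nat) (X : 'I_d -> T -> R).
Hypothesis mX : forall i, measurable_fun setT (X i).
Hypothesis unifX : forall i (t : R), 0 <= t <= 1 -> P [set w | X i w <= t] = t%:E.

Definition orthant (u : 'I_d -> R) : set T := [set w | forall i, X i w <= u i].

Lemma measurable_component_le i t : measurable [set w | X i w <= t].
Proof.
rewrite [X in measurable X](_ : _ = setT `&` X i @^-1` `]-oo, t]).
  exact: mX i measurableT _ (measurable_itv _).
by apply/seteqP; split => w /=; rewrite in_itv /= ?andbT //; case.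
Qed.

Lemma measurable_orthant u : measurable (orthant u).
Proof.
rewrite [X in measurable X](_ : _ = \bigcap_(i in setT) [set w | X i w <= u i]).
  apply: fin_bigcap_measurable => [|i _]; first exact: finite_finset.
  exact: measurable_component_le.
by apply/seteqP; split => w /= le_u i; [move=> _|]; exact: le_u.
Qed.

Lemma subset_orthant u v : (forall i, u i <= v i) -> orthant u `<=` orthant v.
Proof. by move=> le_uv w le_u i; exact: le_trans (le_u i) (le_uv i). Qed.

Lemma orthantI u v :
  orthant u `&` orthant v = orthant (fun i => Num.min (u i) (v i)).
Proof.
apply/seteqP; split => w /=.
  by move=> [le_u le_v] i; rewrite le_min le_u le_v.
by move=> le_uv; split => i; have := le_uv i; rewrite le_min => /andP[].
Qed.

Lemma orthant_ones_compl_null : P (~` orthant (fun=> 1)) = 0%E.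
Proof.
pose U := \big[setU/set0]_(i <- index_enum 'I_d) [set w | 1 < X i w].
have U_null : measurable U /\ P U = 0.
  apply: (big_ind (fun A => measurable A /\ P A = 0)).
  - by split; [exact: measurable0 | exact: measure0].
  - move=> A B [mA A0] [mB B0].
    by split; [exact: measurableU | exact: null_set_setU].
  move=> i _.
  have -> : [set w | 1 < X i w] = ~` [set w | X i w <= 1].
    by apply/seteqP; split => w /=; rewrite ltNge => /negP.
  split; first exact/measurableC/measurable_component_le.
  rewrite probability_setC ?unifX ?ler01 ?lexx ?subee //.
  exact: measurable_component_le.
apply: (subset_measure0 _ U_null.1 _ U_null.2).
  exact/measurableC/measurable_orthant.
move=> w /existsNP[i /negP]; rewrite -ltNge => X_gt1.
by rewrite /U -bigcup_seq; exists i => //; exact: mem_index_enum.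
Qed.

Lemma orthant_margin (i : 'I_d) (u : 'I_d -> R) :
  0 <= u i <= 1 -> (forall k, k != i -> 1 <= u k) -> P (orthant u) = (u i)%:E.
Proof.
move=> u01 u_ge1; rewrite -(unifX i u01); apply/eqP; rewrite eq_le; apply/andP; split.
  apply: le_measure; rewrite ?inE; last by move=> w; apply.
  - exact: measurable_orthant.
  - exact: measurable_component_le.
rewrite -[leRHS](measureU0 _ _ orthant_ones_compl_null); first last.
- exact/measurableC/measurable_orthant.
- exact: measurable_orthant.
apply: le_measure; rewrite ?inE; [exact: measurable_component_le | |].
  exact/measurableU/measurableC/measurable_orthant/measurable_orthant.
move=> w X_le; case: (pselect (orthant (fun=> 1) w)) => [le1|]; [left => k | by right].
by have [->|/u_ge1] := eqVneq k i => //; exact: le_trans (le1 k).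
Qed.

Lemma orthantI_null (u v m : 'I_d -> R) :
  (forall i, Num.min (u i) (v i) <= m i) -> P (orthant m) = 0%E ->
  P (orthant u `&` orthant v) = 0%E.
Proof.
move=> le_m m0; rewrite orthantI.
exact: subset_measure0 (measurable_orthant _) (measurable_orthant _)
  (subset_orthant le_m) m0.
Qed.

Lemma sum_orthant_le (u0 u1 u2 v : 'I_d -> R) :
  (forall i, [/\ u0 i <= v i, u1 i <= v i & u2 i <= v i]) ->
  P (orthant u0 `&` orthant u1) = 0%E -> P (orthant u0 `&` orthant u2) = 0%E ->
  P (orthant u1 `&` orthant u2) = 0%E ->
  (P (orthant u0) + P (orthant u1) + P (orthant u2) <= P (orthant v))%E.
Proof.
move=> le_v null01 null02 null12.
have m u : measurable (orthant u) := measurable_orthant u.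
rewrite -measureU3_null_meet //; apply: le_measure; rewrite ?inE //.
  exact/measurableU/m/measurableU/m/m.
by move=> w [[|]|]; apply: subset_orthant => i; have [] := le_v i.
Qed.

End orthant.

Section Clam_orthants.
Variables (R : realType) (lam : R) (dT : measure_display) (T : measurableType dT).
Variables (P : probability T R) (d : nat) (X : 'I_d -> T -> R).
Hypothesis d_ge3 : (3 <= d)%N.
Hypothesis mX : forall i, measurable_fun setT (X i).
Hypothesis unifX : forall i (t : R), 0 <= t <= 1 -> P [set w | X i w <= t] = t%:E.
Hypothesis cdfX : forall u : 'I_d -> R, (forall i, 0 <= u i <= 1) ->
  P (orthant X u) = (Clam lam u)%:E.

Lemma orthant_pad_ones (s : seq R) :
  all (fun c => 0 <= c <= 1) s -> (size s <= d)%N ->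
  P (orthant X (pad_ones s)) = (phi_pinv lam (\sum_(c <- s) phi lam c))%:E.
Proof. by move=> s01 sd; rewrite cdfX ?Clam_pad_ones //; exact: pad_ones_in01. Qed.

Lemma orthant_pad_ones1 (t : R) : 0 <= t <= 1 ->
  P (orthant X (pad_ones [:: t])) = t%:E.
Proof.
have d_gt0 : (0 < d)%N by exact: leq_trans d_ge3.
move=> t01; apply: (orthant_margin mX unifX (i := Ordinal d_gt0)) => //.
move=> [[|k] k_lt] k_ne0; last by rewrite /pad_ones /= nth_nil lexx.
by case/eqP: k_ne0; apply: val_inj.
Qed.

Lemma orthant_pad_ones3 (c0 c1 c2 : R) :
  0 <= c0 <= 1 -> 0 <= c1 <= 1 -> 0 <= c2 <= 1 ->
  P (orthant X (pad_ones [:: c0; c1; c2])) =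
  (phi_pinv lam (phi lam c0 + phi lam c1 + phi lam c2))%:E.
Proof.
move=> c0_01 c1_01 c2_01; rewrite orthant_pad_ones /= ?c0_01 ?c1_01 ?c2_01 //.
by rewrite !big_cons big_nil addr0 addrA.
Qed.

Lemma orthant_pad_ones3_phi (c0 c1 c2 t : R) :
  0 <= c0 <= 1 -> 0 <= c1 <= 1 -> 0 <= c2 <= 1 -> 0 <= t <= 1 ->
  phi lam c0 + phi lam c1 + phi lam c2 = phi lam t ->
  P (orthant X (pad_ones [:: c0; c1; c2])) = t%:E.
Proof.
move=> c0_01 c1_01 c2_01 t01 phi_t.
rewrite orthant_pad_ones3 // phi_t -(orthant_pad_ones1 t01).
by rewrite orthant_pad_ones /= ?t01 ?big_seq1 //; exact: leq_trans d_ge3.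
Qed.

Lemma orthant_pad_ones3_null (c0 c1 c2 : R) :
  0 <= c0 <= 1 -> 0 <= c1 <= 1 -> 0 <= c2 <= 1 ->
  phi lam 0 <= phi lam c0 + phi lam c1 + phi lam c2 ->
  P (orthant X (pad_ones [:: c0; c1; c2])) = 0%E.
Proof. by move=> *; rewrite orthant_pad_ones3 // phi_pinv_eq0. Qed.

End Clam_orthants.

Theorem theorem5 (R : realType) (lam : R) (d : nat) :
  0 < lam -> (3 <= d)%N -> ~ is_copula (@Clam R lam d).
Proof.
move=> lam_gt0 d_ge3 [dT [T [P [X [mX [unifX cdfX]]]]]].
have [x [w [a [b [[x01 w01 x_lt] [[a_ge0 ab b_le1] [phi_x phi_w phi_0]]]]]]] :=
  phi_three_points lam_gt0.
have a01 : 0 <= a <= 1 by rewrite a_ge0 (le_trans ab).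
have b01 : 0 <= b <= 1 by rewrite b_le1 (le_trans a_ge0).
have eq_w := orthant_pad_ones3_phi d_ge3 mX unifX cdfX.
have null := orthant_pad_ones3_null d_ge3 cdfX.
pose S (c0 c1 c2 : R) := P (orthant X (pad_ones [:: c0; c1; c2])).
have [S_abb S_bab S_bba S_bbb] :
    [/\ S a b b = w%:E, S b a b = w%:E, S b b a = w%:E & S b b b = x%:E].
  by split; apply: eq_w => //; lra.
have [S_aab S_aba S_baa] : [/\ S a a b = 0, S a b a = 0 & S b a a = 0]%E.
  by split; apply: null => //; lra.
have : (S a b b + S b a b + S b b a <= S b b b)%E.
  apply: (sum_orthant_le mX).
  - by move=> [[|[|[|k]]] ?]; split; rewrite /pad_ones /= ?ab ?lexx.
  - apply: (orthantI_null mX _ S_aab) => -[[|[|[|k]]] ?];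
    by rewrite /pad_ones /= ge_min lexx ?orbT.
  - apply: (orthantI_null mX _ S_aba) => -[[|[|[|k]]] ?];
    by rewrite /pad_ones /= ge_min lexx ?orbT.
  - apply: (orthantI_null mX _ S_baa) => -[[|[|[|k]]] ?];
    by rewrite /pad_ones /= ge_min lexx ?orbT.
by rewrite S_abb S_bab S_bba S_bbb -!EFinD lee_fin; lra.
Qed.
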